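(* For any $z>1/\rho$ and any $t\ge0$, $$P_t(z)-P_{t+1}(z)\ge(\rho z-1)K_t(z).$$
   Context: $m$-twist system with parameter $\rho\in(0,1/2]$ on $n$ agents: at each time $t$ the agents are relabeled so that their positions satisfy $x_1(t)\le\dots\le x_n(t)$. A partition of $[n]$ into at most $m$ intervals of consecutive indices $[u_{t,l},v_{t,l}]$ (blocks) is given. The next sorted positions $y_i=x_i(t+1)$ (agents keep their ranks) satisfy, for every block $[u,v]$ and $i\in[u,v]$, $$(1-\rho)x_u+\rho x_{\min\{i+1,v\}}\le y_i\le\rho x_{\max\{i-1,u\}}+(1-\rho)x_v.$$ Define $P_t(z)=\sum_{k=1}^nx_k(t)z^k$. Let $v(k)$ be the right endpoint of the block containing $k$ at time $t$, and $K_t(z)=\sum_{k=1}^n(x_{v(k)}(t)-x_k(t))z^k$. *)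

(* Agents are indexed 1..n (nat), times are nat. *)
From mathcomp Require Import all_boot all_order all_algebra.
Set Implicit Arguments. Unset Strict Implicit. Unset Printing Implicit Defensive.
Import Order.TTheory GRing.Theory Num.Theory.
Local Open Scope ring_scope.

(* (u k, v k) = left/right endpoint of the block containing index k;
   this encodes a partition of [1,n] into intervals of consecutive indices. *)
Definition interval_partition (n : nat) (u v : nat -> nat) : Prop :=
  forall k, (1 <= k <= n)%N ->
    [/\ (1 <= u k <= k)%N, (k <= v k <= n)%N &
        forall j, (u k <= j <= v k)%N -> u j = u k /\ v j = v k].

(* number of blocks = number of right endpoints in [1,n] *)
Definition num_blocks (n : nat) (v : nat -> nat) : nat :=
  count (fun k => v k == k) (iota 1 n).

Definition sorted_at {R : realFieldType} (n : nat) (x : nat -> R) : Prop :=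
  forall i, (1 <= i < n)%N -> x i <= x i.+1.

(* m-twist system with parameter rho on n agents:
   x t k = sorted position of rank k at time t; u t, v t = block structure at time t. *)
Definition twist_system {R : realFieldType} (m n : nat) (rho : R)
  (x : nat -> nat -> R) (u v : nat -> nat -> nat) : Prop :=
  [/\ 0 < rho, rho <= 1/2 &
  forall t : nat,
    [/\ sorted_at n (x t), interval_partition n (u t) (v t),
        (num_blocks n (v t) <= m)%N &
        forall i, (1 <= i <= n)%N ->
          (1 - rho) * x t (u t i) + rho * x t (minn i.+1 (v t i)) <= x t.+1 i /\
          x t.+1 i <= rho * x t (maxn i.-1 (u t i)) + (1 - rho) * x t (v t i)]].

Definition Ppoly {R : realFieldType} (n : nat) (x : nat -> nat -> R) (t : nat) (z : R) : R :=
  \sum_(1 <= k < n.+1) x t k * z ^+ k.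

Definition Kpoly {R : realFieldType} (n : nat) (x : nat -> nat -> R) (v : nat -> nat -> nat)
  (t : nat) (z : R) : R :=
  \sum_(1 <= k < n.+1) (x t (v t k) - x t k) * z ^+ k.

From mathcomp Require Import all_boot all_order all_algebra.
From mathcomp Require Import ring zify.
Set Implicit Arguments.
Unset Strict Implicit.
Unset Printing Implicit Defensive.

Import Order.TTheory GRing.Theory Num.Theory.
Local Open Scope ring_scope.

(** Write [y] for the positions at time [t+1] and [K k = x_(v k) - x_k] for
    the gap from agent [k] to the right end of its block.
    Inside a block [x_(v k) - x_(p k) = K (k-1)]; at the start of a block it
    is [K k >= 0] while [K (k-1) = 0].  Hence, after multiplying by [z^k >= 0],
    every summand dominates [rho (K (k-1) z^k - K k z^(k+1))], which
    telescopes to [0] because [K 0 = K n = 0].  The proof only uses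
    [0 <= rho] and [0 <= z]. *)

Lemma sorted_at_le (R : realFieldType) (n : nat) (X : nat -> R) :
  sorted_at n X -> forall i j, (1 <= i)%N -> (i <= j)%N -> (j <= n)%N -> X i <= X j.
Proof.
move=> sX i j i1 ij jn.
have homoX : {in [pred k | (1 <= k <= n)%N] &, {homo X : k l / (k <= l)%N >-> k <= l}}.
  apply: homo_leq_in => [a|b a c|k l|k]; rewrite ?inE.
  - exact: lexx.
  - exact: le_trans.
  - move=> /andP[k1 _] /andP[_ ln] h /andP[kh hl]; apply/andP; lia.
  - by move=> /andP[k1 _] /andP[_ kn]; apply: sX; lia.
by apply: homoX; rewrite ?inE //; apply/andP; lia.
Qed.

Section IntervalPartition.

Variables (n : nat) (u v : nat -> nat).
Hypothesis partition_uv : interval_partition n u v.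

Lemma partition_last : (0 < n)%N -> v n = n.
Proof.
move=> n_gt0; have [_ /andP[? ?] _] := partition_uv (ltac:(lia) : (1 <= n <= n)%N).
lia.
Qed.

Lemma partition_same_block k :
  (1 <= k <= n)%N -> (u k < k)%N -> v k.-1 = v k.
Proof.
move=> k1n ukk; have [/andP[_ ?] /andP[? _] blk] := partition_uv k1n.
by have [_ ->] := blk k.-1 (ltac:(lia)).
Qed.

Lemma partition_block_end k :
  (2 <= k <= n)%N -> u k = k -> v k.-1 = k.-1.
Proof.
move=> k2n ukk.
have [/andP[_ ?] /andP[vk1 _] blk] := partition_uv (ltac:(lia) : (1 <= k.-1 <= n)%N).
apply/eqP; rewrite eqn_leq vk1 andbT leqNgt; apply/negP => k_in_block.
by have [uk_eq _] := blk k (ltac:(lia)); lia.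
Qed.

End IntervalPartition.

Section TwistStep.

Variables (R : realFieldType) (n : nat) (rho z : R).
Variables (X y : nat -> R) (u v : nat -> nat).
Hypotheses (sX : sorted_at n X) (partition_uv : interval_partition n u v).
Hypotheses (rho_ge0 : 0 <= rho) (z_ge0 : 0 <= z).
Hypothesis y_le : forall k, (1 <= k <= n)%N ->
  y k <= rho * X (maxn k.-1 (u k)) + (1 - rho) * X (v k).

(* Index [0] is no agent; setting its gap to [0] makes the telescoping exact. *)
Definition block_gap k := if k == 0%N then 0 else X (v k) - X k.

Lemma block_gap_ge0 k : (k <= n)%N -> 0 <= block_gap k.
Proof.
rewrite /block_gap; case: eqP => [_ _|k0 kn]; first exact: lexx.
have [_ /andP[? ?] _] := partition_uv (ltac:(lia) : (1 <= k <= n)%N).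
by rewrite subr_ge0; apply: (sorted_at_le sX); lia.
Qed.

Lemma block_gap_last : block_gap n = 0.
Proof.
rewrite /block_gap; case: eqP => // /eqP n0.
by rewrite (partition_last partition_uv) ?subrr // lt0n.
Qed.

Lemma twist_step_term k : (1 <= k <= n)%N ->
  rho * (block_gap k.-1 * z ^+ k - block_gap k * z ^+ k.+1) <=
  (X k - y k) * z ^+ k - (rho * z - 1) * ((X (v k) - X k) * z ^+ k).
Proof.
move=> k1n; have zk_ge0 : 0 <= z ^+ k by rewrite exprn_ge0.
have gapk : block_gap k = X (v k) - X k by rewrite /block_gap ifF //; apply/eqP; lia.
have [/andP[uk_gt0 uk_le] _ _] := partition_uv k1n.
have yk := y_le k1n; rewrite gapk exprS -subr_ge0.
case: (ltnP (u k) k) => [uk_lt | uk_ge].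
- have gapk1 : block_gap k.-1 = X (v k) - X k.-1.
    by rewrite /block_gap ifF ?(partition_same_block partition_uv) //; apply/eqP; lia.
  rewrite (_ : maxn _ _ = k.-1) in yk; last by lia.
  have -> : (X k - y k) * z ^+ k - (rho * z - 1) * ((X (v k) - X k) * z ^+ k)
            - rho * (block_gap k.-1 * z ^+ k - (X (v k) - X k) * (z * z ^+ k))
          = z ^+ k * (rho * X k.-1 + (1 - rho) * X (v k) - y k).
    by rewrite gapk1; ring.
  by rewrite mulr_ge0 // subr_ge0.
- have gapk1 : block_gap k.-1 = 0.
    rewrite /block_gap; case: eqP => // k1.
    by rewrite (partition_block_end partition_uv) ?subrr //; lia.
  rewrite (_ : maxn _ _ = k) in yk; last by lia.
  have gap_ge0 : 0 <= X (v k) - X k by rewrite -gapk block_gap_ge0 //; lia.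
  have -> : (X k - y k) * z ^+ k - (rho * z - 1) * ((X (v k) - X k) * z ^+ k)
            - rho * (block_gap k.-1 * z ^+ k - (X (v k) - X k) * (z * z ^+ k))
          = z ^+ k * ((rho * X k + (1 - rho) * X (v k) - y k) + rho * (X (v k) - X k)).
    by rewrite gapk1; ring.
  by rewrite mulr_ge0 // addr_ge0 ?mulr_ge0 // subr_ge0.
Qed.

Lemma twist_step_gain :
  (rho * z - 1) * \sum_(1 <= k < n.+1) (X (v k) - X k) * z ^+ k <=
  \sum_(1 <= k < n.+1) (X k - y k) * z ^+ k.
Proof.
rewrite -subr_ge0 mulr_sumr -sumrB.
have telescoped :
    \sum_(1 <= k < n.+1) rho * (block_gap k.-1 * z ^+ k - block_gap k * z ^+ k.+1) = 0.
  rewrite (telescope_sumr_eq (fun k => - (rho * block_gap k.-1 * z ^+ k))) //=.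
    by rewrite block_gap_last /block_gap /=; ring.
  by move=> k _ /=; ring.
rewrite -[leLHS]telescoped !big_nat; apply: ler_sum => k /andP[k1 kn].
by apply: twist_step_term; lia.
Qed.

End TwistStep.

Theorem lemma4 (R : realFieldType) (m n : nat) (rho : R)
  (x : nat -> nat -> R) (u v : nat -> nat -> nat) :
  twist_system m n rho x u v ->
  forall (z : R) (t : nat), 1 / rho < z ->
    Ppoly n x t z - Ppoly n x t.+1 z >= (rho * z - 1) * Kpoly n x v t z.
Proof.
move=> [rho_gt0 _ step] z t z_gt.
have z_ge0 : 0 <= z by apply/ltW/(lt_trans _ z_gt); rewrite divr_gt0.
have [sX partition_uv _ bounds] := step t.
rewrite /Ppoly /Kpoly -sumrB.
rewrite [leRHS](eq_bigr (fun k => (x t k - x t.+1 k) * z ^+ k)) => [|k _];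
  last by rewrite mulrBl.
apply: (twist_step_gain sX partition_uv (ltW rho_gt0) z_ge0) => k k1n.
by have [_ ->] := bounds k k1n.
Qed.
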